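(* Let $S$ be a set. A set of $S$-probabilities is $\vee$-specific if and only if it is both specific and weakly structured; i.e. $\mathcal C_2=\mathcal C_1\cap\mathcal C_4$.
   Context: An $S$-probability is a function $p\colon S\to[0,1]$; sets $P$ of them are ordered pointwise, $0,1$ are constant functions, $p':=1-p$, sums are pointwise; $p\vee q$ denotes the supremum in $P$. $p\wedge q=0$ means the only $x\in P$ with $x\le p,q$ is $x=0$; $p\perp q$ means $p\le 1-q$. Conditions: (1) $0,1\in P$; (2) $p\in P\Rightarrow 1-p\in P$; (3) $p,q\in P$, $p\wedge q=0\Rightarrow p+q\in P$; (6) $p,q\in P$, $p\wedge q=0\Rightarrow p+q\in P$ and $p+q=p\vee q$ in $P$; (8) $p,q,r\in P$, $p\perp q$, $q\perp r$, $p\wedge r=0\Rightarrow p+q+r\le 1$. $\mathcal C_1$: specific sets ((1),(2),(3)); $\mathcal C_2$: $\vee$-specific sets (specific sets satisfying (6)); $\mathcal C_4$: weakly structured sets ((1),(2),(8)). *)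

From Stdlib Require Import Reals.
Open Scope R_scope.

Definition zerof {S : Type} : S -> R := fun _ => 0.
Definition onef {S : Type} : S -> R := fun _ => 1.
Definition complf {S : Type} (p : S -> R) : S -> R := fun s => 1 - p s.
Definition addf {S : Type} (p q : S -> R) : S -> R := fun s => p s + q s.
Definition lef {S : Type} (p q : S -> R) : Prop := forall s, p s <= q s.

Definition is_S_prob_set {S : Type} (P : (S -> R) -> Prop) : Prop :=
  forall p, P p -> forall s, 0 <= p s <= 1.

Definition meet_zero {S : Type} (P : (S -> R) -> Prop) (p q : S -> R) : Prop :=
  forall x, P x -> lef x p -> lef x q -> x = zerof.

Definition perp {S : Type} (p q : S -> R) : Prop := lef p (complf q).

Definition is_sup_in {S : Type} (P : (S -> R) -> Prop) (p q r : S -> R) : Prop :=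
  P r /\ lef p r /\ lef q r /\
  (forall x, P x -> lef p x -> lef q x -> lef r x).

Definition cond1 {S : Type} (P : (S -> R) -> Prop) : Prop := P zerof /\ P onef.
Definition cond2 {S : Type} (P : (S -> R) -> Prop) : Prop :=
  forall p, P p -> P (complf p).
Definition cond3 {S : Type} (P : (S -> R) -> Prop) : Prop :=
  forall p q, P p -> P q -> meet_zero P p q -> P (addf p q).
Definition cond6 {S : Type} (P : (S -> R) -> Prop) : Prop :=
  forall p q, P p -> P q -> meet_zero P p q ->
    P (addf p q) /\ is_sup_in P p q (addf p q).
Definition cond8 {S : Type} (P : (S -> R) -> Prop) : Prop :=
  forall p q r, P p -> P q -> P r -> perp p q -> perp q r -> meet_zero P p r ->
    lef (addf (addf p q) r) onef.

Definition specific {S : Type} (P : (S -> R) -> Prop) : Prop :=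
  is_S_prob_set P /\ cond1 P /\ cond2 P /\ cond3 P.
Definition vee_specific {S : Type} (P : (S -> R) -> Prop) : Prop :=
  specific P /\ cond6 P.
Definition weakly_structured {S : Type} (P : (S -> R) -> Prop) : Prop :=
  is_S_prob_set P /\ cond1 P /\ cond2 P /\ cond8 P.

(** The conditions p ⊥ q and q ⊥ r say that p and r lie below 1 - q, which is
    in P by (2), while p + q + r <= 1 says that p + r lies below 1 - q.  So (8)
    states that p + r is below every element of P above p and r when p ∧ r = 0,
    which is exactly the least-upper-bound part of (6); the remaining
    upper-bound part holds because S-probabilities are nonnegative. *)

From Stdlib Require Import Reals Lra.
Open Scope R_scope.

Section VeeSpecific.

Variable S : Type.
Implicit Types p q r x : S -> R.

Lemma perp_sym p q : perp p q -> perp q p.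
Proof. unfold perp, lef, complf; intros H s; specialize (H s); lra. Qed.

Lemma perp_complf_r p x : perp p (complf x) <-> lef p x.
Proof. unfold perp, lef, complf; split; intros H s; specialize (H s); lra. Qed.

Lemma perp_complf_l x q : perp (complf x) q <-> lef q x.
Proof. unfold perp, lef, complf; split; intros H s; specialize (H s); lra. Qed.

Lemma addf3_le_onef p q r :
  lef (addf (addf p q) r) onef <-> lef (addf p r) (complf q).
Proof. unfold lef, addf, onef, complf; split; intros H s; specialize (H s); lra. Qed.

Lemma lef_addf_l p q : (forall s, 0 <= q s) -> lef p (addf p q).
Proof. intros Hq s; specialize (Hq s); unfold addf; lra. Qed.

Lemma lef_addf_r p q : (forall s, 0 <= p s) -> lef q (addf p q).
Proof. intros Hp s; specialize (Hp s); unfold addf; lra. Qed.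

Variable P : (S -> R) -> Prop.

Lemma cond6_cond8 : cond2 P -> cond6 P -> cond8 P.
Proof.
  intros H2 H6 p q r Pp Pq Pr Hpq Hqr Hpr.
  destruct (H6 p r Pp Pr Hpr) as [_ [_ [_ [_ Hleast]]]].
  apply addf3_le_onef, Hleast.
  - now apply H2.
  - exact Hpq.
  - exact (perp_sym q r Hqr).
Qed.

Lemma cond8_least_upper_bound : cond2 P -> cond8 P ->
  forall p q x, P p -> P q -> meet_zero P p q -> P x -> lef p x -> lef q x ->
  lef (addf p q) x.
Proof.
  intros H2 H8 p q x Pp Pq Hpq Px Hpx Hqx.
  assert (Hsum : lef (addf (addf p (complf x)) q) onef).
  { apply H8; auto.
    - now apply perp_complf_r.
    - now apply perp_complf_l. }
  intro s; specialize (Hsum s); unfold addf, complf, onef in *; lra.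
Qed.

Lemma cond8_cond6 : is_S_prob_set P -> cond2 P -> cond3 P -> cond8 P -> cond6 P.
Proof.
  intros HP H2 H3 H8 p q Pp Pq Hpq.
  assert (Ppq : P (addf p q)) by now apply H3.
  split; [exact Ppq|].
  split; [exact Ppq|].
  split; [apply lef_addf_l; intro s; exact (proj1 (HP q Pq s))|].
  split; [apply lef_addf_r; intro s; exact (proj1 (HP p Pp s))|].
  intros x Px Hpx Hqx.
  exact (cond8_least_upper_bound H2 H8 p q x Pp Pq Hpq Px Hpx Hqx).
Qed.

End VeeSpecific.

Theorem lemma3p2 (S : Type) (P : (S -> R) -> Prop) (HP : is_S_prob_set P) :
  vee_specific P <-> (specific P /\ weakly_structured P).
Proof.
  split.
  - intros [Hspec H6].
    split; [exact Hspec|].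
    destruct Hspec as (Hprob & H1 & H2 & _).
    repeat (split; [assumption|]).
    now apply cond6_cond8.
  - intros [Hspec (_ & _ & _ & H8)].
    split; [exact Hspec|].
    destruct Hspec as (_ & _ & H2 & H3).
    now apply cond8_cond6.
Qed.
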